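(* Let $E$ be a finite set, $\mathcal{W}\subseteq\{+,-,0\}^E$ an affine oriented matroid, and $X,Y\in\mathcal{W}$ with $\underline{X}=\underline{Y}$, $X\neq -Y$ and $I(X,-Y)\cap\mathcal{W}=\emptyset$. Then $B(X,-Y)\cap\mathcal{W}=\emptyset$.
   Context: For $X\in\{+,-,0\}^E$: support $\underline{X}=\{e:X_e\neq0\}$; $(-X)_e=-X_e$; composition $(X\circ Y)_e=X_e$ if $X_e\neq0$, else $Y_e$; $S(X,Y)=\{e: X_e,Y_e\neq0, X_e\neq Y_e\}$. An oriented matroid on $F$ is $\mathcal{O}\subseteq\{+,-,0\}^F$ with: (O1) zero vector in $\mathcal{O}$; (O2) $X\in\mathcal{O}\Rightarrow -X\in\mathcal{O}$; (O3) $X,Y\in\mathcal{O}\Rightarrow X\circ Y\in\mathcal{O}$; (O4) if $X,Y\in\mathcal{O}$, $\underline{X}=\underline{Y}$, $e\in S(X,Y)$, there is $Z\in\mathcal{O}$ with $Z_e=0$ and $Z_f=(X\circ Y)_f=(Y\circ X)_f$ for all $f\notin S(X,Y)$. $\mathcal{W}\subseteq\{+,-,0\}^E$ is an affine oriented matroid if there exist $g\notin E$ and an oriented matroid $\mathcal{O}$ on $E\cup\{g\}$ with $\mathcal{W}=\{X|_E: X\in\mathcal{O}, X_g=+\}$. For $X,Y$ with $\underline{X}=\underline{Y}$ and $X\neq Y$: $I_e(X,Y)=\{V : \underline{V}\subseteq\underline{X}\setminus\{e\}, V_f=X_f\ \forall f\notin S(X,Y)\}$ for $e\in S(X,Y)$,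 $I(X,Y)=\bigcup_{e\in S(X,Y)}I_e(X,Y)$, and $B(X,Y)=\{V\in\{+,-,0\}^E: V\notin\{X,Y\}, \underline{V}=\underline{X}, V_f=X_f\ \forall f\notin S(X,Y)\}$. *)

From HB Require Import structures.
From mathcomp Require Import all_boot.
Set Implicit Arguments. Unset Strict Implicit. Unset Printing Implicit Defensive.

Inductive sign := Pos | Neg | Zero.

Definition sign_to (s : sign) : option bool :=
  match s with Pos => Some true | Neg => Some false | Zero => None end.
Definition sign_of (o : option bool) : sign :=
  match o with Some true => Pos | Some false => Neg | None => Zero end.
Lemma sign_toK : cancel sign_to sign_of. Proof. by case. Qed.
HB.instance Definition _ := Finite.copy sign (can_type sign_toK).

Definition sopp (s : sign) : sign :=
  match s with Pos => Neg | Neg => Pos | Zero => Zero end.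

Definition svec (F : finType) := {ffun F -> sign}.

Section SignVectors.
Variable F : finType.
Implicit Types X Y Z V : svec F.

Definition supp X : {set F} := [set e | X e != Zero].
Definition vneg X : svec F := [ffun e => sopp (X e)].
Definition comp X Y : svec F := [ffun e => if X e != Zero then X e else Y e].
Definition sep X Y : {set F} :=
  [set e | [&& X e != Zero, Y e != Zero & X e != Y e]].
Definition vzero : svec F := [ffun _ => Zero].

Definition oriented_matroid (O : {set svec F}) : Prop :=
  [/\ vzero \in O,
      (forall X, X \in O -> vneg X \in O),
      (forall X Y, X \in O -> Y \in O -> comp X Y \in O)
    & (forall X Y e, X \in O -> Y \in O -> supp X = supp Y -> e \in sep X Y ->
         exists2 Z, Z \in O &
           Z e = Zero /\
           (forall f, f \notin sep X Y -> Z f = comp X Y f /\ Z f = comp Y X f))].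

Definition Ie X Y (e : F) : {set svec F} :=
  [set V | (supp V \subset supp X :\ e) &&
           [forall f, (f \notin sep X Y) ==> (V f == X f)]].
Definition Iset X Y : {set svec F} := \bigcup_(e in sep X Y) Ie X Y e.
Definition Bset X Y : {set svec F} :=
  [set V | [&& V != X, V != Y, supp V == supp X &
           [forall f, (f \notin sep X Y) ==> (V f == X f)]]].
End SignVectors.

(* Affine oriented matroid: ground set E + {g}, modelled as option E with
   g = None. *)
Definition restrictE (E : finType) (X : svec (option E)) : svec E :=
  [ffun e => X (Some e)].

Definition affine_oriented_matroid (E : finType) (W : {set svec E}) : Prop :=
  exists O : {set svec (option E)},
    oriented_matroid O /\
    W = [set restrictE X | X in [set X in O | X None == Pos]].

From Pilot Require Import Defs.
From mathcomp Require Import all_boot.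

(* Eliminating [e] between [X] and a covector [V] of [B(X,-Y)] in the
   underlying oriented matroid gives a covector [Z] with [Z e = 0] that agrees
   with [X] outside [S(X,V)], in particular on [g], where both are [+].  Since
   [V] agrees with [X] outside [S(X,-Y)], the restriction of [Z] lies in
   [I_e(X,-Y)] and in [W], which is excluded by hypothesis. *)

Set Implicit Arguments.
Unset Strict Implicit.
Unset Printing Implicit Defensive.

Section SignVectors.
Variable F : finType.
Implicit Types (X Y V Z : svec F) (e f : F).

Lemma in_supp X f : (f \in supp X) = (X f != Zero).
Proof. by rewrite inE. Qed.

Lemma comp_supp_sub X Y : supp Y \subset supp X -> Defs.comp X Y = X.
Proof.
move=> /subsetP sYX; apply/ffunP => f; rewrite ffunE.
case: ifP => // /negbFE /eqP Xf0; rewrite Xf0; apply/eqP.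
by apply: contraT => Yf; move: (sYX f); rewrite !in_supp Xf0 Yf => /(_ isT).
Qed.

Lemma sep_supp_eq X Y e : supp X = supp Y -> (e \in sep X Y) = (X e != Y e).
Proof.
move=> /setP /(_ e); rewrite !in_supp inE.
by case: (X e); case: (Y e).
Qed.

Lemma sep_supp_eq_neq0 X Y : supp X = supp Y -> X != Y -> sep X Y != set0.
Proof.
move=> sXY; apply: contra_neq => sep0; apply/ffunP => f; apply/eqP.
by have := in_set0 f; rewrite -sep0 sep_supp_eq // => /negbFE.
Qed.

Lemma sep_sub_of_agree X V (S : {set F}) :
  (forall f, f \notin S -> V f = X f) -> sep X V \subset S.
Proof.
move=> agree; apply/subsetP => f; apply: contraTT => /agree Vf.
by rewrite inE Vf eqxx !andbF.
Qed.

Lemma Bset_sep_sub X Y V : V \in Bset X Y -> sep X V \subset sep X Y.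
Proof.
rewrite inE => /and4P [_ _ _ /forallP agree].
by apply: sep_sub_of_agree => f /(implyP (agree f)) /eqP.
Qed.

Lemma Ie_sub X Y Y' e : sep X Y \subset sep X Y' -> Ie X Y e \subset Ie X Y' e.
Proof.
move=> /subsetP sYY'; apply/subsetP => Z; rewrite !inE => /andP [-> /forallP agree].
apply/forallP => f; apply/implyP => fY'; apply: (implyP (agree f)).
by apply: contra fY'; apply: sYY'.
Qed.

Lemma Ie_agree X Y Z e f : Z \in Ie X Y e -> X f = Y f -> Z f = X f.
Proof.
rewrite inE => /andP [_ /forallP agree] XYf.
by apply/eqP; apply: (implyP (agree f)); rewrite inE XYf eqxx !andbF.
Qed.

Lemma oriented_matroid_elim_Ie (O : {set svec F}) X Y e :
  oriented_matroid O -> X \in O -> Y \in O -> supp X = supp Y ->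
  e \in sep X Y -> exists2 Z, Z \in O & Z \in Ie X Y e.
Proof.
case=> _ _ _ elim XO YO sXY eXY.
have [Z ZO [Ze Zagree]] := elim X Y e XO YO sXY eXY.
have ZX f : f \notin sep X Y -> Z f = X f.
  by case/Zagree => -> _; rewrite comp_supp_sub // sXY.
exists Z => //; rewrite inE; apply/andP; split.
  apply/subsetP => f; rewrite !inE => Zf; apply/andP; split.
    by apply: contraNneq Zf => ->; rewrite Ze.
  have [|/ZX <- //] := boolP (f \in sep X Y).
  by rewrite inE => /and3P [].
by apply/forallP => f; apply/implyP => /ZX ->.
Qed.

End SignVectors.

Section AffineOrientedMatroids.
Variable E : finType.
Implicit Types (X Y V Z : svec (option E)) (W : {set svec E}).

Lemma supp_restrictE X e : (e \in supp (restrictE X)) = (Some e \in supp X).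
Proof. by rewrite !inE ffunE. Qed.

Lemma sep_restrictE X Y e :
  (e \in sep (restrictE X) (restrictE Y)) = (Some e \in sep X Y).
Proof. by rewrite !inE !ffunE. Qed.

Lemma supp_lift X Y : X None = Y None ->
  supp (restrictE X) = supp (restrictE Y) -> supp X = supp Y.
Proof.
move=> XYg /setP sXY; apply/setP => -[e|]; first by rewrite -!supp_restrictE sXY.
by rewrite !in_supp XYg.
Qed.

Lemma Ie_restrictE X Y Z e :
  Z \in Ie X Y (Some e) -> restrictE Z \in Ie (restrictE X) (restrictE Y) e.
Proof.
rewrite !inE => /andP [/subsetP sZX /forallP agree]; apply/andP; split.
  apply/subsetP => f; rewrite supp_restrictE => /sZX.
  by rewrite !inE !ffunE.
apply/forallP => f; rewrite sep_restrictE !ffunE; exact: agree.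
Qed.

Lemma affine_elim_Ie W (X V : svec E) (e : E) : affine_oriented_matroid W ->
  X \in W -> V \in W -> supp X = supp V -> e \in sep X V ->
  exists2 Z, Z \in W & Z \in Ie X V e.
Proof.
move=> [O [OM ->]] /imsetP [Xh + ->] /imsetP [Vh + ->] sXV.
rewrite sep_restrictE => + + eXV.
rewrite !inE => /andP [XO /eqP Xg] /andP [VO /eqP Vg].
have XVg : Xh None = Vh None by rewrite Xg Vg.
have [Z ZO ZIe] := oriented_matroid_elim_Ie OM XO VO (supp_lift XVg sXV) eXV.
exists (restrictE Z); last exact: Ie_restrictE.
by apply/imsetP; exists Z => //; rewrite inE ZO (Ie_agree ZIe XVg) Xg.
Qed.

End AffineOrientedMatroids.

Theorem lemma2p3 (E : finType) (W : {set svec E}) :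
  affine_oriented_matroid W ->
  forall X Y : svec E, X \in W -> Y \in W ->
    supp X = supp Y -> X != vneg Y ->
    Iset X (vneg Y) :&: W = set0 ->
    Bset X (vneg Y) :&: W = set0.
Proof.
move=> AW X Y XW _ _ _ noI; apply/setP => V; rewrite in_set0 inE.
apply/negP => /andP [VB VW].
have := VB; rewrite inE => /and4P [VX _ /eqP sVX _].
have XV : X != V by rewrite eq_sym.
have /set0Pn [e eXV] := sep_supp_eq_neq0 (esym sVX) XV.
have [Z ZW ZIe] := affine_elim_Ie AW XW VW (esym sVX) eXV.
have sep_sub := Bset_sep_sub VB.
have ZI : Z \in Iset X (vneg Y).
  apply/bigcupP; exists e; first exact: (subsetP sep_sub).
  exact: (subsetP (Ie_sub e sep_sub)).
by have := in_set0 Z; rewrite -noI inE ZI ZW.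
Qed.
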